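(* Let $\mathcal{P}=\langle P,\le\rangle$ be a finite bounded poset with $|P|\ge 2$. Then there exists $m\in\mathbb{N}$ such that $(R^+_{All})^m(\mathcal{P})$ is graded.
   Context: A poset is bounded if it has a least element $\bot$ and greatest element $\top$. The height $H$ of a finite poset is the number of elements in its largest chain. $a\lessdot b$ denotes covering. A bounded poset with top $\top$ and height $H$ is graded if there is $\rho:P\to\{0,\dots,H-1\}$ with $\rho(\top)=0$ and $\rho(a)=\rho(b)-1$ whenever $a\lessdot b$. For $a\in P$, $\uparrow a=\{b:b\ge a\}$, $\downarrow a=\{b:b\le a\}$ as subposets; the standard interval rank is $R^+(a)=[H(\uparrow a)-1,\;H(\mathcal{P})-H(\downarrow a)]$. Weak order: $[x_*,x^*]\le_W[y_*,y^*]$ iff $x_*\le y_*$ and $x^*\le y^*$. Define $R^+_{All}(\mathcal{P})=\langle P,\le_{R_A}\rangle$ on the same underlying set, where $p<_{R_A}q$ iff $R^+(p)>_W R^+(q)$ (strictly), and $\le_{R_A}$ is the reflexive closure of $<_{R_A}$ (so distinct elements with equal standard interval rank are incomparable). $(R^+_{All})^m$ denotes $m$-fold iteration, each time computing $R^+$ in the current poset. *)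

From mathcomp Require Import all_boot.
Set Implicit Arguments. Unset Strict Implicit. Unset Printing Implicit Defensive.

(* A finite poset is a finType T with an order relation le : rel T.
   Subposets are subsets S : {set T} with the induced relation. *)

Section PosetDefs.
Variable T : finType.
Variable le : rel T.

Definition is_poset : Prop :=
  [/\ reflexive le, antisymmetric le & transitive le].

Definition lt (a b : T) : bool := le a b && (a != b).

Definition covers (a b : T) : bool :=
  lt a b && ~~ [exists c, lt a c && lt c b].

Definition chainb (C : {set T}) : bool :=
  [forall x in C, forall y in C, le x y || le y x].

Definition height (S : {set T}) : nat :=
  \max_(C : {set T} | (C \subset S) && chainb C) #|C|.

Definition upset (a : T) : {set T} := [set b | le a b].
Definition downset (a : T) : {set T} := [set b | le b a].

(* standard interval rank R^+(a) = [H(up a) - 1, H(P) - H(down a)] *)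
Definition Rplus (a : T) : nat * nat :=
  ((height (upset a)).-1, height [set: T] - height (downset a)).

Definition bounded : Prop :=
  (exists bot : T, forall x, le bot x) /\ (exists top : T, forall x, le x top).

(* graded: bounded, and a rank function with rho(top) = 0, values in
   {0,..,H-1}, and rho(a) = rho(b) + 1 whenever a ⋖ b (rank = distance
   from the top) *)
Definition graded : Prop :=
  (exists bot : T, forall x, le bot x) /\
  exists top : T, (forall x, le x top) /\
    exists rho : T -> nat,
      [/\ rho top = 0,
          (forall a, rho a < height [set: T]) &
          (forall a b, covers a b -> rho a = (rho b).+1)].
End PosetDefs.

Definition weak_le (x y : nat * nat) : bool := (x.1 <= y.1) && (x.2 <= y.2).

Definition RAll (T : finType) (le : rel T) : rel T :=
  fun p q => (p == q) || (weak_le (Rplus le q) (Rplus le p) && (Rplus le p != Rplus le q)).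

(* Every poset is contained in its image under R^+_All, which is again a
   poset, so the iterates form an increasing sequence of relations on a
   finite set and eventually reach a fixed point Q.  In a bounded poset Q
   every level 1 <= k <= H is attained by an element c with
   H(down c) + H(up c) = H + 1 (walk up a maximum chain from the bottom).
   If Q is fixed by R^+_All, comparing an arbitrary element a with such a c
   of the same upper height shows that H(down a) + H(up a) = H + 1 for all
   a; then R^+ is determined by H(up a), any two elements with different
   upper heights are comparable, and so a covering a < b forces
   H(up a) = H(up b) + 1, i.e. a -> H(up a) - 1 is a rank function. *)

From mathcomp Require Import all_boot zify.
Set Implicit Arguments. Unset Strict Implicit.

Section Chains.
Variables (T : finType) (le : rel T).

Lemma chainbP (C : {set T}) :
  reflect (forall x y, x \in C -> y \in C -> le x y || le y x) (chainb le C).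
Proof.
apply: (iffP forall_inP) => [h x y xC yC | h x xC].
  exact: (forall_inP (h x xC)).
by apply/forall_inP => y yC; apply: h.
Qed.

Lemma chainbS (C D : {set T}) : C \subset D -> chainb le D -> chainb le C.
Proof.
move=> /subsetP sCD /chainbP chD; apply/chainbP => x y xC yC.
by apply: chD; apply: sCD.
Qed.

Lemma chain_leq_height (S C : {set T}) :
  C \subset S -> chainb le C -> #|C| <= height le S.
Proof. by move=> sCS chC; apply: (leq_bigmax_cond C); rewrite sCS chC. Qed.

Lemma height_chain (S : {set T}) :
  exists C : {set T}, [/\ C \subset S, chainb le C & #|C| = height le S].
Proof.
have nonempty : 0 < #|[pred C : {set T} | (C \subset S) && chainb le C]|.
  apply/card_gt0P; exists set0.
  by rewrite inE sub0set; apply/chainbP => x y; rewrite inE.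
have [C] := eq_bigmax_cond (fun C : {set T} => #|C|) nonempty.
by rewrite inE => /andP [sCS chC] E; exists C; split => //; apply: esym E.
Qed.

Lemma height_subset (S S' : {set T}) :
  S \subset S' -> height le S <= height le S'.
Proof.
move=> sSS'; have [C [sCS chC <-]] := height_chain S.
exact: chain_leq_height (subset_trans sCS sSS') chC.
Qed.

End Chains.

Definition dual_rel (T : Type) (le : rel T) : rel T := fun x y => le y x.

Lemma height_dual (T : finType) (le : rel T) (S : {set T}) :
  height (dual_rel le) S = height le S.
Proof.
apply: eq_bigl => C; congr (_ && _).
by apply/chainbP/chainbP => h x y xC yC; rewrite orbC; apply: h.
Qed.

Lemma dual_poset (T : finType) (le : rel T) :
  is_poset le -> is_poset (dual_rel le).
Proof.
case=> refl anti trans; split => // [x y | y x z yx zy].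
  by rewrite /dual_rel andbC; apply: anti.
exact: trans zy yx.
Qed.

Section PosetHeight.
Variables (T : finType) (le : rel T).
Hypothesis le_poset : is_poset le.

Let le_refl : reflexive le. Proof. by case: le_poset. Qed.
Let le_anti : antisymmetric le. Proof. by case: le_poset. Qed.
Let le_trans : transitive le. Proof. by case: le_poset. Qed.

Local Notation hu a := (height le (upset le a)).
Local Notation hd a := (height le (downset le a)).

Lemma height_set1 x : height le [set x] = 1.
Proof.
apply/eqP; rewrite eqn_leq; apply/andP; split.
  have [C [sC _ <-]] := height_chain le [set x].
  by rewrite -(cards1 x) subset_leq_card.
rewrite -(cards1 x) chain_leq_height //.
by apply/chainbP => a b; rewrite !inE => /eqP -> /eqP ->; rewrite le_refl.
Qed.

Lemma height_upset_gt0 a : 0 < hu a.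
Proof.
by rewrite -(height_set1 a) height_subset // sub1set inE le_refl.
Qed.

Lemma upset_greatest top : (forall x, le x top) -> upset le top = [set top].
Proof.
move=> top_max; apply/setP => x; rewrite !inE.
apply/idP/eqP => [topx | ->]; last exact: le_refl.
by apply: le_anti; rewrite topx top_max.
Qed.

Lemma height_upset_lt a b : lt le a b -> hu b < hu a.
Proof.
case/andP=> ab a_neq_b; have [C [sCb chC <-]] := height_chain le (upset le b).
have aNC : a \notin C.
  apply/negP => /(subsetP sCb); rewrite inE => ba.
  by move/negP: a_neq_b; apply; apply/eqP/le_anti; rewrite ab ba.
have above_a x : x \in C -> le a x.
  by move/(subsetP sCb); rewrite inE; apply: le_trans.
suff : #|a |: C| <= hu a by rewrite cardsU1 aNC.
apply: chain_leq_height.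
  apply/subsetP => x; rewrite !inE => /predU1P [-> | /above_a //].
  exact: le_refl.
apply/chainbP => x y; rewrite !inE.
case/predU1P => [-> | xC] /predU1P [-> | yC].
- by rewrite le_refl.
- by rewrite above_a.
- by rewrite above_a ?orbT.
- exact: (chainbP _ _ chC).
Qed.

Lemma height_downset_upset a : hd a + hu a <= (height le [set: T]).+1.
Proof.
have [C1 [sC1 chC1 <-]] := height_chain le (downset le a).
have [C2 [sC2 chC2 <-]] := height_chain le (upset le a).
have below x : x \in C1 -> le x a by move/(subsetP sC1); rewrite inE.
have above x : x \in C2 -> le a x by move/(subsetP sC2); rewrite inE.
have cardI : #|C1 :&: C2| <= 1.
  rewrite -(cards1 a) subset_leq_card //; apply/subsetP => x /setIP [x1 x2].
  by rewrite inE; apply/eqP/le_anti; rewrite below ?above.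
have cardU : #|C1 :|: C2| <= height le [set: T].
  apply: chain_leq_height (subsetT _) _; apply/chainbP => x y.
  rewrite !inE => /orP [x1 | x2] /orP [y1 | y2].
  - exact: (chainbP _ _ chC1).
  - by rewrite (le_trans (below x x1) (above y y2)).
  - by rewrite (le_trans (below y y1) (above x x2)) orbT.
  - exact: (chainbP _ _ chC2).
by move: cardU; rewrite cardsU; lia.
Qed.

Lemma chain_least (C : {set T}) :
  chainb le C -> C != set0 -> exists2 w, w \in C & forall z, z \in C -> le w z.
Proof.
move: {2}#|C| (erefl #|C|) => n; elim: n C => [|n IH] C cardC chC.
  by move/set0Pn => [x xC]; move/card0_eq: cardC => /(_ x); rewrite xC.
case/set0Pn => x xC; have [C_x | ] := eqVneq (C :\ x) set0.
  exists x => // z zC; move/eqP: C_x; rewrite setD_eq0 => /subsetP /(_ z zC).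
  by rewrite inE => /eqP ->; rewrite le_refl.
move/(IH _ _ (chainbS (subsetDl C [set x]) chC)) => [| y].
  by move: cardC; rewrite (cardsD1 x) xC => -[].
rewrite !inE => /andP [yx yC] least_y.
have leastD z : z \in C -> z != x -> le y z.
  by move=> zC zx; apply: least_y; rewrite !inE zx zC.
case/orP: (chainbP _ _ chC x y xC yC) => [xy | yx'].
  exists x => // z zC; have [-> | zx] := eqVneq z x; first exact: le_refl.
  exact: le_trans xy (leastD z zC zx).
by exists y => // z zC; have [-> | zx] := eqVneq z x; [|apply: leastD].
Qed.

Lemma height_upset_pred x :
  1 < hu x -> exists2 y, lt le x y & hu y = (hu x).-1.
Proof.
move=> hux; have [C [sCx chC cardC]] := height_chain le (upset le x).
have cardCx : (hu x).-1 <= #|C :\ x|.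
  by move: cardC; rewrite (cardsD1 x C); case: (x \in C) => /=; lia.
have [|w] := chain_least (chainbS (subsetDl C [set x]) chC).
  by rewrite -card_gt0; lia.
rewrite !inE => /andP [wx wC] least_w.
have xw : lt le x w.
  by move: (subsetP sCx w wC); rewrite inE /lt eq_sym wx => ->.
exists w => //; have := height_upset_lt xw.
suff : #|C :\ x| <= hu w by lia.
apply: chain_leq_height (chainbS (subsetDl _ _) chC).
by apply/subsetP => z /least_w; rewrite inE.
Qed.

End PosetHeight.

Lemma height_downset_lt (T : finType) (le : rel T) a b :
  is_poset le -> lt le a b -> height le (downset le a) < height le (downset le b).
Proof.
move=> /dual_poset dual_le ab; rewrite -!(height_dual le).
case/andP: ab => ab a_neq_b.
by apply: (height_upset_lt dual_le); rewrite /lt /dual_rel ab eq_sym a_neq_b.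
Qed.

Section BoundedPoset.
Variables (T : finType) (le : rel T).
Hypothesis le_poset : is_poset le.
Variable bot : T.
Hypothesis bot_least : forall x, le bot x.

Local Notation hu a := (height le (upset le a)).
Local Notation hd a := (height le (downset le a)).
Local Notation H := (height le [set: T]).

Lemma exists_level_element j : j < H -> exists c, hu c = H - j /\ hd c = j.+1.
Proof.
elim: j => [|j IH] jH.
  exists bot; split.
    by rewrite subn0; congr (height le _); apply/setP => x; rewrite !inE bot_least.
  have := upset_greatest (dual_poset le_poset) bot_least.
  by rewrite /upset /downset => ->; rewrite height_set1.
have [c [huc hdc]] := IH (ltnW jH).
have [|y cy huy] := height_upset_pred le_poset (x := c); first lia.
exists y; split; first lia.
have := height_downset_lt le_poset cy; have := height_downset_upset le_poset y; lia.
Qed.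

End BoundedPoset.

Section FixedPoset.
Variables (T : finType) (Q : rel T).
Hypothesis Q_poset : is_poset Q.
Hypothesis Q_bounded : bounded Q.
Hypothesis Q_fixed : RAll Q =2 Q.

Local Notation hu a := (height Q (upset Q a)).
Local Notation hd a := (height Q (downset Q a)).
Local Notation H := (height Q [set: T]).

Let hu_leq a : hu a <= H. Proof. exact/height_subset/subsetT. Qed.
Let hu_gt0 a : 0 < hu a. Proof. exact: height_upset_gt0. Qed.

Lemma fixed_lt p q :
  weak_le (Rplus Q q) (Rplus Q p) -> Rplus Q p != Rplus Q q -> lt Q p q.
Proof.
move=> wqp Rpq; rewrite /lt -Q_fixed /RAll wqp Rpq orbT /=.
by apply: contraNneq Rpq => ->.
Qed.

Lemma fixed_level_element j : j < H -> exists c, hu c = H - j /\ hd c = j.+1.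
Proof. by have [[bot bot_least] _] := Q_bounded; apply: exists_level_element. Qed.

Lemma fixed_height_downset_upset a : hd a + hu a = H.+1.
Proof.
have := height_downset_upset Q_poset a; rewrite leq_eqVlt => /orP [/eqP // | ltH].
have := hu_gt0 a; have := hu_leq a => hua_le hua_gt0.
have [|c [huc hdc]] := fixed_level_element (j := H - hu a); first lia.
suff /(height_upset_lt Q_poset) : lt Q a c by lia.
by apply: fixed_lt; rewrite /Rplus /weak_le /= ?xpair_eqE; lia.
Qed.

Lemma fixed_lt_height p q : hu q < hu p -> lt Q p q.
Proof.
have := fixed_height_downset_upset p; have := fixed_height_downset_upset q.
have := hu_gt0 q; have := hu_leq p => hup_le huq_gt0 eq_q eq_p qp.
by apply: fixed_lt; rewrite /Rplus /weak_le /= ?xpair_eqE; lia.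
Qed.

Lemma fixed_graded : graded Q.
Proof.
have [[bot bot_least] [top top_greatest]] := Q_bounded.
split; first by exists bot.
exists top; split => //; exists (fun a => (hu a).-1); split.
- by rewrite upset_greatest // height_set1.
- by move=> a; have := hu_gt0 a; have := hu_leq a; lia.
move=> a b /andP [ab no_between].
have := height_upset_lt Q_poset ab; have := hu_leq a; have := hu_gt0 b.
move=> hub_gt0 hua_le hba; suff : hu a <= (hu b).+1 by lia.
rewrite leqNgt; apply/negP => hab.
have [|c [huc _]] := fixed_level_element (j := H - (hu b).+1); first lia.
case/negP: no_between; apply/existsP; exists c.
by rewrite !fixed_lt_height //; lia.
Qed.

End FixedPoset.

Lemma weak_le_anti : antisymmetric weak_le.
Proof.
case=> [p1 p2] [q1 q2]; rewrite /weak_le /= => /andP [] /andP [? ?] /andP [? ?].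
by congr pair; lia.
Qed.

Lemma weak_le_trans : transitive weak_le.
Proof.
by case=> [p1 p2] [q1 q2] [r1 r2]; rewrite /weak_le /= => /andP [? ?] /andP [? ?]; lia.
Qed.

Lemma RAll_poset (T : finType) (le : rel T) : is_poset (RAll le).
Proof.
split.
- by move=> a; rewrite /RAll eqxx.
- move=> a b /andP []; rewrite /RAll.
  case/predU1P => [// | /andP [w1 n1]] /predU1P [// | /andP [w2 n2]].
  by move/negP: n1; case; apply/eqP/weak_le_anti; rewrite w1 w2.
- move=> b a c; rewrite /RAll.
  case/predU1P => [-> // | /andP [w1 n1]] /predU1P [<- | /andP [w2 n2]].
    by rewrite w1 n1 orbT.
  rewrite (weak_le_trans w2 w1) /=; apply/orP; right.
  by apply: contraNneq n2 => Eac; apply/eqP/weak_le_anti; rewrite w2 -Eac w1.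
Qed.

Lemma subrel_RAll (T : finType) (le : rel T) : is_poset le -> subrel le (RAll le).
Proof.
move=> le_poset a b ab; rewrite /RAll; case: eqVneq => //= a_neq_b.
have lab : lt le a b by rewrite /lt ab a_neq_b.
have := height_upset_lt le_poset lab; have := height_downset_lt le_poset lab.
have := height_upset_gt0 le_poset b.
by rewrite /Rplus /weak_le /= xpair_eqE; lia.
Qed.

Lemma bounded_subrel (T : finType) (le le' : rel T) :
  subrel le le' -> bounded le -> bounded le'.
Proof.
move=> le_le' [[bot bot_least] [top top_greatest]].
by split; [exists bot | exists top] => x; apply: le_le'.
Qed.

Lemma increasing_sets_stationary (T : finType) (A : nat -> {set T}) :
  (forall k, A k \subset A k.+1) -> exists k, A k.+1 = A k.
Proof.
move=> A_incr.
suff /(_ #|T|.+1) [// | too_big] : forall k, (exists k, A k.+1 = A k) \/ k <= #|A k|.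
  by move: (max_card (mem (A #|T|.+1))); rewrite leqNgt too_big.
elim=> [|k [//|IH]]; [by right | by left |].
have [Ek | NEk] := eqVneq (A k.+1) (A k); first by left; exists k.
right; suff : #|A k| < #|A k.+1| by lia.
by apply: proper_card; rewrite properEneq A_incr eq_sym NEk.
Qed.

Lemma iter_RAll_poset (T : finType) (le : rel T) k :
  is_poset le -> is_poset (iter k (@RAll T) le).
Proof. by case: k => [|k] // _; apply: RAll_poset. Qed.

Lemma RAll_iter_fixpoint (T : finType) (le : rel T) :
  is_poset le -> exists k, RAll (iter k (@RAll T) le) =2 iter k (@RAll T) le.
Proof.
move=> le_poset; pose F k := iter k (@RAll T) le.
have F_incr k : subrel (F k) (F k.+1) by apply/subrel_RAll/iter_RAll_poset.
pose A k := [set p : T * T | F k p.1 p.2].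
have [|k Ek] := @increasing_sets_stationary _ A.
  by move=> k; apply/subsetP => p; rewrite !inE; apply: F_incr.
by exists k => p q; move/setP/(_ (p, q)): Ek; rewrite !inE.
Qed.

Theorem lemma1 (T : finType) (le : rel T) :
  is_poset le -> bounded le -> 1 < #|T| ->
  exists m : nat, graded (iter m (@RAll T) le).
Proof.
move=> le_poset le_bounded _.
have [k Fk_fixed] := RAll_iter_fixpoint le_poset.
have F_bounded j : bounded (iter j (@RAll T) le).
  elim: j => [|j IH] //.
  exact: bounded_subrel (subrel_RAll (iter_RAll_poset j le_poset)) IH.
by exists k; apply: fixed_graded => //; apply: iter_RAll_poset.
Qed.
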